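(* Let $T$ be a finite tree. Then its line graph $L(T)$ is co-chordal if and only if $T$ is one of the following: (i) a star graph; (ii) a broom of diameter $3$; (iii) a (partially) whiskered star; (iv) a path $P_n$ with $2\leq n\leq 5$.
   Context: The line graph $L(G)$ has vertex set $E(G)$, two vertices adjacent iff the corresponding edges share a vertex. A graph is chordal if it has no induced cycle of length $>3$; it is co-chordal if its complement is chordal. A star has vertices $u,v_1,\dots,v_n$ and edges $\{u,v_i\}$. $P_n$ has vertices $u_1,\dots,u_n$ and edges $\{u_i,u_{i+1}\}$. A broom is obtained from $P_n$ by attaching $m$ new vertices via pendant edges to its first (or last) vertex. A (partially) whiskered star is obtained from a star by attaching a new pendant edge (with a new vertex) to each vertex of the star (respectively to each vertex of some subset of its vertices). *)

From mathcomp Require Import all_boot.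
Set Implicit Arguments. Unset Strict Implicit. Unset Printing Implicit Defensive.

(* Simple graphs: a relation e on a finType V, assumed symmetric and irreflexive. *)

Definition is_connected (V : finType) (e : rel V) : Prop :=
  forall x y : V, connect e x y.
Definition is_acyclic (V : finType) (e : rel V) : Prop :=
  forall s : seq V, uniq s -> 3 <= size s -> ~~ cycle e s.
Definition is_tree (V : finType) (e : rel V) : Prop :=
  0 < #|V| /\ is_connected e /\ is_acyclic e.

Definition is_edge (V : finType) (e : rel V) (s : {set V}) : bool :=
  [exists x, exists y, e x y && (s == [set x; y])].
Notation line_vert e := {s : {set _} | is_edge e s}.
Definition line_adj (V : finType) (e : rel V) : rel (line_vert e) :=
  fun a b => (a != b) && (val a :&: val b != set0).

Definition compl_adj (W : finType) (g : rel W) : rel W :=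
  fun x y => (x != y) && ~~ g x y.

Definition has_induced_long_cycle (W : finType) (g : rel W) : Prop :=
  exists k : nat, 4 <= k /\ exists c : 'I_k -> W, injective c /\
    forall i j : 'I_k, g (c i) (c j) = ((i.+1 %% k == j) || (j.+1 %% k == i)).
Definition chordal (W : finType) (g : rel W) : Prop :=
  ~ has_induced_long_cycle g.
Definition cochordal (W : finType) (g : rel W) : Prop :=
  chordal (compl_adj g).

Definition isomorphic (V W : finType) (e : rel V) (f : rel W) : Prop :=
  exists g : V -> W, bijective g /\ forall x y, f (g x) (g y) = e x y.

Fixpoint walk (W : finType) (g : rel W) (k : nat) (x y : W) : bool :=
  match k with
  | 0 => x == y
  | k'.+1 => [exists z, g x z && walk g k' z y]
  end.
Definition diameter3 (W : finType) (g : rel W) : Prop :=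
  (forall x y : W, [exists j : 'I_4, walk g j x y]) /\
  (exists x y : W, ~~ [exists j : 'I_3, walk g j x y]).

Definition star_adj (n : nat) : rel 'I_n.+1 :=
  fun i j => ((i == 0 :> nat) && (j != 0 :> nat)) || ((j == 0 :> nat) && (i != 0 :> nat)).

Definition path_adj (n : nat) : rel 'I_n :=
  fun i j => (i.+1 == j :> nat) || (j.+1 == i :> nat).

Definition broom_adj (n m : nat) : rel 'I_(n + m) :=
  fun i j => [|| (i < n) && (j < n) && ((i.+1 == j :> nat) || (j.+1 == i :> nat)),
                (i == 0 :> nat) && (n <= j) | (j == 0 :> nat) && (n <= i)].

(* Partially whiskered star: star on 'I_n.+1 (inl), and for each vertex i in S a
   new pendant vertex (inr i) attached to i. *)
Definition wstar_pred (n : nat) (S : {set 'I_n.+1}) (x : 'I_n.+1 + 'I_n.+1) : bool :=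
  if x is inr i then i \in S else true.
Notation wstar_vert S := {x : _ + _ | wstar_pred S x}.
Definition wstar_adj (n : nat) (S : {set 'I_n.+1}) : rel (wstar_vert S) :=
  fun x y => match val x, val y with
             | inl i, inl j => star_adj i j
             | inl i, inr j => i == j
             | inr i, inl j => i == j
             | inr _, inr _ => false
             end.
Arguments line_adj {V} e.
Arguments wstar_adj {n} S.
Arguments star_adj n : clear implicits.
Arguments path_adj n : clear implicits.
Arguments broom_adj n m : clear implicits.

(* An induced 4-cycle in the complement of L(T) amounts to two vertex-disjoint
   2-edge paths (P3s) of T, while a longer induced cycle would yield a closed walk
   in T around one of its edges, which acyclicity forbids.  So L(T) is
   co-chordal iff the P3s of T pairwise meet.  By a Helly-type argument in the
   tree, pairwise meeting P3s share a common vertex c, and a tree in which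
   every P3 passes through c is a partially whiskered star centred at c.
   Conversely, each listed family has such a hub vertex or at most five
   vertices. *)

From mathcomp Require Import all_boot zify.
Set Implicit Arguments. Unset Strict Implicit. Unset Printing Implicit Defensive.

Section ThreeVertexPaths.
Variables (V : finType) (e : rel V).
Hypotheses (e_sym : symmetric e) (e_irr : irreflexive e).

Lemma rel_neq x y : e x y -> x != y.
Proof. by apply: contraTneq => ->; rewrite e_irr. Qed.

Definition P3 (a b d : V) : bool := [&& e a b, e b d & a != d].

Definition two_disjoint_P3 : Prop :=
  exists a b d a' b' d', [/\ P3 a b d, P3 a' b' d' & uniq [:: a; b; d; a'; b'; d']].

Definition P3_hub (c : V) : bool :=
  [forall a, forall b, forall d, P3 a b d ==> (c \in [:: a; b; d])].

Lemma P3_hubP c : reflect (forall a b d, P3 a b d -> c \in [:: a; b; d]) (P3_hub c).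
Proof.
apply: (iffP forallP) => [hub a b d | hub a].
  by apply/implyP; move/forallP: (hub a) => /(_ b) /forallP /(_ d).
by apply/forallP => b; apply/forallP => d; apply/implyP; apply: hub.
Qed.

Lemma P3_hubPn c : ~~ P3_hub c -> exists a b d, P3 a b d /\ c \notin [:: a; b; d].
Proof.
move=> /forallPn [a /forallPn [b /forallPn [d]]]; rewrite negb_imply => /andP [Pabd cN].
by exists a, b, d.
Qed.

Lemma P3_rev a b d : P3 a b d -> P3 d b a.
Proof. by move=> /and3P [ab bd ad]; rewrite /P3 e_sym bd e_sym ab eq_sym. Qed.

Lemma P3_uniq a b d : P3 a b d -> uniq [:: a; b; d].
Proof. by move=> /and3P [ab bd ad]; rewrite /= !inE !negb_or ad (rel_neq ab) (rel_neq bd). Qed.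

Lemma P3s_meet a b d a' b' d' : ~ two_disjoint_P3 ->
  P3 a b d -> P3 a' b' d' -> has (mem [:: a; b; d]) [:: a'; b'; d'].
Proof.
move=> no2 P P'; apply/negPn/negP => disj; apply: no2.
exists a, b, d, a', b', d'; split=> //.
rewrite -[[:: a; _; _; _; _; _]]/([:: a; b; d] ++ [:: a'; b'; d']) cat_uniq.
by rewrite disj !P3_uniq.
Qed.

Lemma P3_hub_no_two_disjoint c : P3_hub c -> ~ two_disjoint_P3.
Proof.
move=> /P3_hubP hub [a [b [d [a' [b' [d' [P P']]]]]]].
rewrite -[[:: a; _; _; _; _; _]]/([:: a; b; d] ++ [:: a'; b'; d']) cat_uniq.
by case/and3P => _ /hasPn /(_ c (hub _ _ _ P')); rewrite hub.
Qed.

Lemma card_le5_no_two_disjoint : #|V| <= 5 -> ~ two_disjoint_P3.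
Proof.
move=> card_le5 [a [b [d [a' [b' [d' [_ _ /card_uniqP card6]]]]]]].
by have := max_card (mem [:: a; b; d; a'; b'; d']); rewrite card6 leqNgt ltnS card_le5.
Qed.

End ThreeVertexPaths.

Lemma isomorphic_two_disjoint_P3 (V W : finType) (e : rel V) (f : rel W) :
  isomorphic e f -> two_disjoint_P3 e -> two_disjoint_P3 f.
Proof.
move=> [g [/bij_inj g_inj gf]] [a [b [d [a' [b' [d' [P P' U]]]]]]].
have gP x y z : P3 f (g x) (g y) (g z) = P3 e x y z by rewrite /P3 !gf (inj_eq g_inj).
exists (g a), (g b), (g d), (g a'), (g b'), (g d').
by rewrite !gP; split=> //; rewrite -(map_inj_uniq g_inj) in U.
Qed.

Lemma isomorphic_of_embedding (V W : finType) (e : rel V) (f : rel W) (h : W -> V) :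
  injective h -> (forall v, exists x, h x = v) -> (forall x y, e (h x) (h y) = f x y) ->
  isomorphic e f.
Proof.
move=> h_inj h_surj h_rel.
have [g hK gK] : bijective h.
  apply: (inj_card_bij h_inj); rewrite -(card_codom h_inj).
  by apply/subset_leq_card/subsetP => v _; have [x <-] := h_surj v; apply: codom_f.
by exists g; split; [exact: Bijective gK hK | move=> x y; rewrite -h_rel !gK].
Qed.

Lemma induced_C4 (W : finType) (g : rel W) (x0 x1 x2 x3 : W) :
  symmetric g -> irreflexive g -> x0 != x2 -> x1 != x3 ->
  g x0 x1 -> g x1 x2 -> g x2 x3 -> g x3 x0 -> ~~ g x0 x2 -> ~~ g x1 x3 ->
  has_induced_long_cycle g.
Proof.
move=> g_sym g_irr x02 x13 g01 g12 g23 g30 g02 g13.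
exists 4; split=> //; exists (fun i : 'I_4 => nth x0 [:: x0; x1; x2; x3] i); split.
  move=> i j /eqP; rewrite nth_uniq // => [/eqP /val_inj //|].
  by rewrite /= !inE !negb_or x02 x13 !(rel_neq g_irr) // g_sym.
case=> [[|[|[|[|i]]]] ?] [[|[|[|[|j]]]] ?] //=; rewrite ?g_irr ?(negbTE g02) ?(negbTE g13) //.
all: by rewrite g_sym ?(negbTE g02) ?(negbTE g13).
Qed.

Definition drop_edge (V : finType) (e : rel V) (E : {set V}) : rel V :=
  [rel x y | e x y && ([set x; y] != E)].

Section Forest.
Variables (V : finType) (e : rel V).
Hypotheses (e_sym : symmetric e) (e_irr : irreflexive e) (e_acyclic : is_acyclic e).

Lemma no_triangle a b d : e a b -> e b d -> e d a -> False.
Proof.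
move=> ab bd da; have: ~~ cycle e [:: a; b; d].
  by apply: e_acyclic; rewrite //= !inE negb_or !(rel_neq e_irr) //; rewrite e_sym.
by rewrite /cycle /= ab bd da.
Qed.

Lemma drop_edge_sym E : symmetric (drop_edge e E).
Proof. by move=> x y; rewrite /drop_edge /= e_sym setUC. Qed.

Lemma acyclic_bridge x y : e x y -> ~~ connect (drop_edge e [set x; y]) x y.
Proof.
move=> xy; apply/negP => /connectP [p] /shortenP [q q_path q_uniq _] y_last.
have q_e : path e x q by apply: sub_path q_path => u v /andP [].
have q_long : 2 <= size q.
  case: q q_path y_last {q_e q_uniq} => [|z [|? ?]] //= q_path y_last.
    by rewrite y_last e_irr in xy.
  by move: q_path; rewrite /drop_edge /= -y_last eqxx andbF.
have: ~~ cycle e (x :: q) by apply: e_acyclic.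
by rewrite /cycle rcons_path q_e -y_last e_sym xy.
Qed.

Lemma P3_connect (E : {set V}) z a b d : P3 e a b d -> z \in E -> z \notin [:: a; b; d] ->
  {in [:: a; b; d] &, forall u v, connect (drop_edge e E) u v}.
Proof.
move=> /and3P [ab bd _] zE; rewrite !inE !negb_or => /and3P [za zb zd].
have notE u v : z != u -> z != v -> [set u; v] != E.
  by move=> zu zv; apply: contraTneq zE => <-; rewrite !inE negb_or zu.
have to_b u : u \in [:: a; b; d] -> connect (drop_edge e E) u b.
  rewrite !inE => /or3P [] /eqP -> //; apply: connect1; rewrite /drop_edge /= notE //.
    by rewrite ab.
  by rewrite e_sym bd.
move=> u v /to_b ub /to_b vb.
by apply: connect_trans ub _; rewrite (sym_connect_sym (drop_edge_sym E)).
Qed.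

Lemma exists_P3_hub : 0 < #|V| -> ~ two_disjoint_P3 e -> exists c, P3_hub e c.
Proof.
move=> /card_gt0P [c0 _] no2.
have [|/P3_hubPn [a [m [z [Pamz _]]]]] := boolP (P3_hub e c0); first by exists c0.
have [|/P3_hubPn [q1 [q2 [q3 [PQ mQ]]]]] := boolP (P3_hub e m); first by exists m.
wlog aQ : a z Pamz / a \in [:: q1; q2; q3].
  move=> hub_of_Q; case/hasP: (P3s_meet e_irr no2 PQ Pamz) => q + qQ.
  rewrite !inE => /or3P [] /eqP qE; subst q; first exact: hub_of_Q Pamz qQ.
    by case/negP: mQ.
  exact: hub_of_Q (P3_rev e_sym Pamz) qQ.
(* a is a hub: a P3 avoiding a would meet both Q and {m, z}, closing a walk
   from m to a that avoids the edge am. *)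
exists a; apply/P3_hubP => r1 r2 r3 PR; apply/negPn/negP => aR.
have /and3P [am mz az] := Pamz.
pose D := drop_edge e [set a; m].
have Q_to_a : {in [:: q1; q2; q3], forall u, connect D u a}.
  by move=> u uQ; apply: P3_connect PQ _ mQ _ _ uQ aQ; rewrite !inE eqxx orbT.
have R_conn := P3_connect PR (set21 a m) aR.
have [r rR mr] : exists2 r, r \in [:: r1; r2; r3] & connect D m r.
  case/hasP: (P3s_meet e_irr no2 Pamz PR) => r rR.
  rewrite !inE => /or3P [] /eqP rE; subst r; first by rewrite rR in aR.
    by exists m.
  exists z => //; apply: connect1; rewrite /D /drop_edge /= mz; apply/eqP => /setP /(_ a).
  by rewrite !inE eqxx (negbTE az) (negbTE (rel_neq e_irr am)).
case/hasP: (P3s_meet e_irr no2 PQ PR) => v vR vQ.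
case/negP: (acyclic_bridge am); rewrite (sym_connect_sym (drop_edge_sym _)).
by apply: connect_trans mr (connect_trans (R_conn _ _ rR vR) (Q_to_a _ vQ)).
Qed.

End Forest.

Section LineGraph.
Variables (V : finType) (e : rel V).
Hypotheses (e_sym : symmetric e) (e_irr : irreflexive e).

Lemma line_vertP (A : line_vert e) : exists x y, e x y /\ val A = [set x; y].
Proof. by case: A => /= s /existsP [x /existsP [y /andP [xy /eqP ->]]]; exists x, y. Qed.

Lemma line_vert_other (A : line_vert e) v :
  v \in val A -> exists2 w, e v w & val A = [set v; w].
Proof.
have [x [y [xy ->]]] := line_vertP A; rewrite !inE => /orP [] /eqP ->; first by exists y.
by exists x; rewrite 1?e_sym // setUC.
Qed.

Lemma line_vert_eq (A : line_vert e) x y :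
  x \in val A -> y \in val A -> x != y -> val A = [set x; y].
Proof.
move=> /line_vert_other [w xw ->]; rewrite !inE => /orP [/eqP -> | /eqP ->] //.
by rewrite eqxx.
Qed.

Lemma line_vert_rel (A : line_vert e) x y : x \in val A -> y \in val A -> x != y -> e x y.
Proof.
have [u [w [uw ->]]] := line_vertP A.
by rewrite !inE => /orP [] /eqP -> /orP [] /eqP ->; rewrite ?eqxx // e_sym.
Qed.

Lemma compl_line_adjE (A B : line_vert e) :
  compl_adj (line_adj e) A B = [disjoint val A & val B].
Proof.
rewrite /compl_adj /line_adj -setI_eq0; have [<-|AB] := eqVneq A B; last by rewrite negbK.
have [x [y [_ ->]]] := line_vertP A.
by rewrite setIid; apply/esym/negbTE/set0Pn; exists x; rewrite !inE eqxx.
Qed.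

Lemma is_edge_set2 x y : e x y -> is_edge e [set x; y].
Proof. by move=> xy; apply/existsP; exists x; apply/existsP; exists y; rewrite xy eqxx. Qed.

Definition edge_vert x y (xy : e x y) : line_vert e := exist (is_edge e) _ (is_edge_set2 xy).

Lemma line_vert_connect (A : line_vert e) (E : {set V}) x y :
  x \in val A -> y \in val A -> val A != E -> connect (drop_edge e E) x y.
Proof.
move=> xA yA AE; have [<-|xy] := eqVneq x y; first exact: connect0.
by apply: connect1; rewrite /drop_edge /= (line_vert_rel xA yA xy) -(line_vert_eq xA yA xy).
Qed.

Lemma P3_of_meeting_edges (A B : line_vert e) : A != B -> ~~ [disjoint val A & val B] ->
  exists a v b, P3 e a v b /\ [:: a; v; b] \subset [predU val A & val B].
Proof.
move=> AB /pred0Pn [v /andP [vA vB]].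
have [a va Aeq] := line_vert_other vA; have [b vb Beq] := line_vert_other vB.
exists a, v, b; split.
  rewrite /P3 e_sym va vb; apply: contraNneq AB => ab.
  by apply/eqP/val_inj; rewrite Aeq Beq ab.
by apply/subsetP => x; rewrite !inE Aeq Beq !inE -!orbA => /or3P [] ->; rewrite ?orbT.
Qed.

Lemma cochordal_line_no_two_disjoint_P3 : cochordal (line_adj e) -> ~ two_disjoint_P3 e.
Proof.
move=> line_cochordal [a [b [d [a' [b' [d' [P P' U]]]]]]]; apply: line_cochordal.
have /and3P [ab bd ad] := P; have /and3P [ab' bd' ad'] := P'.
have disj : [disjoint [:: a; b; d] & [:: a'; b'; d']].
  move: U; rewrite -[[:: a; _; _; _; _; _]]/([:: a; b; d] ++ [:: a'; b'; d']) cat_uniq.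
  by rewrite disjoint_sym disjoint_has => /and3P [].
have sub x y u v w :
    x \in [:: u; v; w] -> y \in [:: u; v; w] -> [set x; y] \subset [:: u; v; w].
  by move=> xs ys; apply/subsetP => z /set2P [] ->.
have across x y x' y' : x \in [:: a; b; d] -> y \in [:: a; b; d] ->
    x' \in [:: a'; b'; d'] -> y' \in [:: a'; b'; d'] -> [disjoint [set x; y] & [set x'; y']].
  by move=> xs ys x't y't; apply: disjointW disj; apply: sub.
have vert_neq x y z (xy : e x y) (yz : e y z) : x != z -> edge_vert xy != edge_vert yz.
  move=> xz; apply/eqP => /(congr1 val) /setP /(_ x).
  by rewrite /= !inE eqxx (negbTE xz) (negbTE (rel_neq e_irr xy)).
apply: (induced_C4 (x0 := edge_vert ab) (x1 := edge_vert ab') (x2 := edge_vert bd)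
                   (x3 := edge_vert bd')); rewrite ?vert_neq ?compl_line_adjE //=.
- by move=> A B; rewrite !compl_line_adjE disjoint_sym.
- by move=> A; rewrite /compl_adj eqxx.
- by rewrite across // !inE eqxx ?orbT.
- by rewrite disjoint_sym across // !inE eqxx ?orbT.
- by rewrite across // !inE eqxx ?orbT.
- by rewrite disjoint_sym across // !inE eqxx ?orbT.
- by apply/negP => /disjointFr /(_ (set22 a b)); rewrite set21.
- by apply/negP => /disjointFr /(_ (set22 a' b')); rewrite set21.
Qed.

Lemma no_two_disjoint_P3_cochordal_line :
  is_acyclic e -> ~ two_disjoint_P3 e -> cochordal (line_adj e).
Proof.
move=> e_acyclic no2 [k [k4 [c [c_inj c_rel]]]].
case: k k4 c c_inj c_rel => [|[|[|[|k]]]] // _ c c_inj c_rel.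
pose L i := c (inord i).
have L_neq i j : i < k.+4 -> j < k.+4 -> i != j -> L i != L j.
  by move=> ik jk; apply: contra_neq => /c_inj /(congr1 val); rewrite /= !inordK.
have L_rel i j : i < k.+4 -> j < k.+4 ->
    [disjoint val (L i) & val (L j)] = (i.+1 %% k.+4 == j) || (j.+1 %% k.+4 == i).
  by move=> ik jk; rewrite -compl_line_adjE c_rel !inordK.
have L_disj i : i.+1 < k.+4 -> [disjoint val (L i) & val (L i.+1)].
  by move=> ik; rewrite L_rel ?(modn_small ik) ?eqxx //; lia.
have L_meet i j : i.+1 < j < k.+4 -> (0 < i) || (j.+1 < k.+4) ->
    ~~ [disjoint val (L i) & val (L j)].
  move=> /andP [ij jk] no_wrap; have ik : i.+1 < k.+4 by lia.
  rewrite L_rel ?(ltnW ik) // (modn_small ik).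
  have [jk'|kj] := ltnP j.+1 k.+4; first by rewrite modn_small //; lia.
  have -> : j.+1 = k.+4 by lia.
  by rewrite modnn; lia.
case: k => [|k] in c c_inj c_rel L L_neq L_rel L_disj L_meet *.
  have [a [v [b [Pavb sub02]]]] :=
    P3_of_meeting_edges (L_neq 0 2 isT isT isT) (L_meet 0 2 isT isT).
  have [a' [w [b' [Pawb sub13]]]] :=
    P3_of_meeting_edges (L_neq 1 3 isT isT isT) (L_meet 1 3 isT isT).
  apply: no2; exists a, v, b, a', w, b'; split => //.
  rewrite -[[:: a; _; _; _; _; _]]/([:: a; v; b] ++ [:: a'; w; b']) cat_uniq.
  rewrite !(P3_uniq e_irr) // -disjoint_has disjoint_sym (disjointW sub02 sub13) //.
  have d30 : [disjoint val (L 3) & val (L 0)] by rewrite L_rel.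
  apply/pred0P => x /=; rewrite !inE; apply/negP => /andP [/orP [x0|x2] /orP [x1|x3]].
  - by rewrite (disjointFr (L_disj 0 isT) x0) in x1.
  - by rewrite (disjointFl d30 x0) in x3.
  - by rewrite (disjointFl (L_disj 1 isT) x2) in x1.
  - by rewrite (disjointFr (L_disj 2 isT) x2) in x3.
have point i j : i.+1 < j < k.+1.+4 -> (0 < i) || (j.+1 < k.+1.+4) ->
    exists2 x, x \in val (L i) & x \in val (L j).
  by move=> ij no_wrap; case/pred0Pn: (L_meet i j ij no_wrap) => x /andP []; exists x.
(* The walk p t s r q joins the ends of the edge L 0 = {p, q} without using it. *)
have [p p0 p2] := point 0 2 isT isT.
have [q q0 q3] := point 0 3 isT isT.
have [r r1 r3] := point 1 3 isT isT.
have [s s1 s4] := point 1 4 isT isT.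
have [t t2 t4] := point 2 4 isT isT.
have pq : p != q by apply: contraTneq q3 => <-; rewrite (disjointFr (L_disj 2 isT) p2).
have step i x y : 0 < i < k.+1.+4 -> x \in val (L i) -> y \in val (L i) ->
    connect (drop_edge e (val (L 0))) x y.
  move=> /andP [i0 ik] xi yi; apply: line_vert_connect xi yi _.
  by rewrite val_eqE L_neq // -lt0n.
case/negP: (acyclic_bridge e_sym e_irr e_acyclic (line_vert_rel p0 q0 pq)).
rewrite -(line_vert_eq p0 q0 pq).
apply: connect_trans (step 2 p t isT p2 t2) _; apply: connect_trans (step 4 t s isT t4 s4) _.
exact: connect_trans (step 1 s r isT s1 r1) (step 3 r q isT r3 q3).
Qed.

End LineGraph.

Section HubTree.
Variables (V : finType) (e : rel V).
Hypotheses (e_sym : symmetric e) (e_irr : irreflexive e).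
Hypotheses (e_acyclic : is_acyclic e) (e_connected : is_connected e).
Variable c : V.
Hypothesis c_hub : P3_hub e c.

Lemma hub_branch p y y' : e c p -> e p y -> e p y' -> y != c -> y' != c -> y = y'.
Proof.
move=> cp py py' yc y'c; apply/eqP/negPn/negP => yy'.
have /P3_hubP /(_ y p y') := c_hub; rewrite /P3 e_sym py py' yy' => /(_ isT).
by rewrite !inE eq_sym (negbTE yc) (negbTE (rel_neq e_irr cp)) eq_sym (negbTE y'c).
Qed.

Lemma hub_twig_adjE p y v : e c p -> e p y -> y != c -> e y v = (v == p).
Proof.
move=> cp py yc; apply/idP/eqP => [yv|->]; last by rewrite e_sym.
apply/eqP/negPn/negP => vp.
have /P3_hubP /(_ p y v) := c_hub; rewrite /P3 py yv eq_sym vp => /(_ isT).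
rewrite !inE (negbTE (rel_neq e_irr cp)) eq_sym (negbTE yc) /= => /eqP cv.
by apply: (no_triangle e_sym e_irr e_acyclic cp py); rewrite cv.
Qed.

Lemma hub_ball v : [|| v == c, e c v | [exists p, e c p && e p v]].
Proof.
pose ball := [pred v | [|| v == c, e c v | [exists p, e c p && e p v]]].
have ball_closed : closed e ball.
  apply: intro_closed; first exact: sym_connect_sym.
  move=> x y xy; rewrite !inE => /or3P [/eqP xc | cx | /existsP [p /andP [cp px]]].
  - by rewrite -xc xy orbT.
  - have [->|yc] := eqVneq y c; first by [].
    by apply/or3P/Or33/existsP; exists x; rewrite cx xy.
  - have [xc|xc] := eqVneq x c; first by rewrite -xc xy orbT.
    by move: xy; rewrite (hub_twig_adjE _ cp px xc) => /eqP ->; rewrite cp orbT.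
by have := closed_connect ball_closed (e_connected c v); rewrite !inE eqxx => <-.
Qed.

(* The star of wstar_adj has the hub c at index 0 and the neighbours of c at
   the other indices; twig p is the neighbour of p other than c, or the junk
   value c when there is none. *)
Definition hub_nbrs := [set v | e c v].

Lemma in_hub_nbrs v : (v \in hub_nbrs) = e c v.
Proof. by rewrite inE. Qed.

Definition spoke (i : 'I_#|hub_nbrs|.+1) : V :=
  if unlift ord0 i is Some j then enum_val j else c.

Definition twig (p : V) : V := odflt c [pick y | e p y && (y != c)].

Definition whiskered : {set 'I_#|hub_nbrs|.+1} :=
  [set i | (i != ord0) && (twig (spoke i) != c)].

Definition hub_embed (x : wstar_vert whiskered) : V :=
  match val x with inl i => spoke i | inr i => twig (spoke i) end.

Lemma spoke0 : spoke ord0 = c.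
Proof. by rewrite /spoke unlift_none. Qed.

Lemma spoke_inj : injective spoke.
Proof.
have nbr (j : 'I_#|hub_nbrs|) : e c (enum_val j) by rewrite -in_hub_nbrs enum_valP.
move=> i i'; rewrite /spoke; case: unliftP => [j ->|->]; case: unliftP => [j' ->|->] //.
- by move/enum_val_inj ->.
- by move=> E; have := nbr j; rewrite E e_irr.
- by move=> E; have := nbr j'; rewrite -E e_irr.
Qed.

Lemma spoke_eq_hub i : (spoke i == c) = (i == ord0).
Proof. by rewrite -{1}spoke0 (inj_eq spoke_inj). Qed.

Lemma spoke_adjE i : e c (spoke i) = (i != ord0).
Proof.
rewrite /spoke; case: unliftP => [j ->|->]; last by rewrite e_irr eqxx.
by rewrite -in_hub_nbrs enum_valP.
Qed.

Lemma spoke_surj p : e c p -> exists i, spoke i = p.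
Proof.
move=> cp; have pN : p \in hub_nbrs by rewrite in_hub_nbrs.
by exists (lift ord0 (enum_rank_in pN p)); rewrite /spoke liftK enum_rankK_in.
Qed.

Lemma spoke_rel i j : e (spoke i) (spoke j) = star_adj _ i j.
Proof.
have -> : star_adj _ i j = (i == ord0) && (j != ord0) || (j == ord0) && (i != ord0) by [].
have [->|i0] := eqVneq i ord0; have [->|j0] := eqVneq j ord0; rewrite ?spoke0 ?e_irr //=.
- by rewrite spoke_adjE j0.
- by rewrite e_sym spoke_adjE i0.
apply/negbTE/negP => ij.
by apply: (no_triangle e_sym e_irr e_acyclic (_ : e c (spoke i)) ij);
  [rewrite spoke_adjE | rewrite e_sym spoke_adjE].
Qed.

Lemma twig_adj p : twig p != c -> e p (twig p).
Proof. by rewrite /twig; case: pickP => [y /andP [] | _] //=; rewrite eqxx. Qed.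

Lemma twig_eq p y : e c p -> e p y -> y != c -> twig p = y.
Proof.
move=> cp py yc; rewrite /twig; case: pickP => [y' /andP [py' y'c] | none] /=.
  exact: hub_branch cp py' py y'c yc.
by have := none y; rewrite py yc.
Qed.

Lemma whiskeredP i : i \in whiskered ->
  [/\ e c (spoke i), e (spoke i) (twig (spoke i)) & twig (spoke i) != c].
Proof. by rewrite inE => /andP [i0 tw]; rewrite spoke_adjE i0 twig_adj. Qed.

Lemma twig_spoke_adjE i v : i \in whiskered -> e (twig (spoke i)) v = (v == spoke i).
Proof. by case/whiskeredP => cp pt tc; rewrite (hub_twig_adjE _ cp pt tc). Qed.

Lemma twig_neq_spoke i j : j \in whiskered -> twig (spoke j) != spoke i.
Proof.
move=> jS; have [_ _ tc] := whiskeredP jS; apply/eqP => E.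
have j0 : j != ord0 by move: jS; rewrite inE => /andP [].
have := twig_spoke_adjE c jS.
rewrite e_sym E spoke_adjE (eq_sym c) spoke_eq_hub (negbTE j0).
by move=> /negbFE /eqP i0; move: tc; rewrite E i0 spoke0 eqxx.
Qed.

Lemma hub_embed_rel x y : e (hub_embed x) (hub_embed y) = wstar_adj whiskered x y.
Proof.
case: x y => [[i|i] iS] [[j|j] jS]; rewrite /hub_embed /wstar_adj /=.
- exact: spoke_rel.
- by rewrite e_sym twig_spoke_adjE // (inj_eq spoke_inj).
- by rewrite twig_spoke_adjE // (inj_eq spoke_inj) eq_sym.
- by rewrite twig_spoke_adjE //; apply/negbTE/twig_neq_spoke.
Qed.

Lemma hub_embed_inj : injective hub_embed.
Proof.
case=> [[i|i] iS] [[j|j] jS]; rewrite /hub_embed /= => E; apply: val_inj => /=.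
- by rewrite (spoke_inj E).
- by move: (twig_neq_spoke i jS); rewrite E eqxx.
- by move: (twig_neq_spoke j iS); rewrite E eqxx.
have := twig_spoke_adjE (spoke j) iS; rewrite E twig_spoke_adjE // eqxx.
by move=> /esym /eqP /spoke_inj ->.
Qed.

Lemma hub_embed_surj v : exists x, hub_embed x = v.
Proof.
have inl_embed i : hub_embed (exist (wstar_pred whiskered) (inl i) isT) = spoke i by [].
case/or3P: (hub_ball v) => [/eqP -> | /spoke_surj [i <-] | /existsP [p /andP [cp pv]]].
- by exists (exist _ (inl ord0) isT); rewrite inl_embed spoke0.
- by exists (exist _ (inl i) isT).
have [->|vc] := eqVneq v c; first by exists (exist _ (inl ord0) isT); rewrite inl_embed spoke0.
have [i pE] := spoke_surj cp.
have iS : i \in whiskered.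
  by rewrite inE -spoke_adjE pE cp (twig_eq cp pv vc) vc.
by exists (exist _ (inr i) iS); rewrite /hub_embed /= pE (twig_eq cp pv vc).
Qed.

Lemma hub_isomorphic_wstar : isomorphic e (wstar_adj whiskered).
Proof. exact: isomorphic_of_embedding hub_embed_inj hub_embed_surj hub_embed_rel. Qed.

End HubTree.

Lemma star_hub n : P3_hub (star_adj n) ord0.
Proof. by apply/P3_hubP => a b d; rewrite /P3 /star_adj !inE -!val_eqE /=; lia. Qed.

Lemma wstar_hub n (S : {set 'I_n.+1}) : P3_hub (wstar_adj S) (exist _ (inl ord0) isT).
Proof.
apply/P3_hubP => [[[a|a] ?] [[b|b] ?] [[d|d] ?]];
  by rewrite /P3 /wstar_adj /star_adj !inE !eqE /= ?eqE /= -?val_eqE /=; lia.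
Qed.

Section Broom.
Variables n m : nat.

Definition broom_level (v : 'I_(n + m)) : nat := if v < n then v.+1 else 0.

Lemma broom_level_walk j x y : walk (broom_adj n m) j x y ->
  broom_level y <= broom_level x + j /\ broom_level x <= broom_level y + j.
Proof.
elim: j x => [|j IHj] x /=; first by move=> /eqP ->; lia.
case/existsP => z /andP [xz /IHj]; move: xz; rewrite /broom_adj /broom_level.
by case: (ltnP x n) => ?; case: (ltnP z n) => ? /=; lia.
Qed.

Lemma broom_diameter3 : diameter3 (broom_adj n m) -> n <= 3 \/ n + m <= 4.
Proof.
move=> [walk3 _]; have [n3|n4] := leqP n 3; [by left | right].
have far x y : broom_level x + 3 < broom_level y -> False.
  by move=> lxy; case/existsP: (walk3 x y) => j /broom_level_walk; have := ltn_ord j; lia.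
have [m0|m_pos] := posnP m.
  rewrite m0 addn0 leqNgt; apply/negP => n5.
  have o0 : 0 < n + m by lia. have o4 : 4 < n + m by lia.
  apply: (far (Ordinal o0) (Ordinal o4)).
  by rewrite /broom_level /=; case: ifP; case: ifP => //; lia.
have o3 : 3 < n + m by lia. have on : n < n + m by lia.
exfalso; apply: (far (Ordinal on) (Ordinal o3)).
by rewrite /broom_level /= ltnn; case: ifP => //; lia.
Qed.

Lemma broom_hub (o : 0 < n + m) : n <= 3 -> P3_hub (broom_adj n m) (Ordinal o).
Proof. by move=> n3; apply/P3_hubP => a b d; rewrite /P3 /broom_adj !inE -!val_eqE /=; lia. Qed.

Lemma broom_no_two_disjoint_P3 :
  diameter3 (broom_adj n m) -> ~ two_disjoint_P3 (broom_adj n m).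
Proof.
move=> /broom_diameter3 small; have [nm5|nm5] := leqP (n + m) 5.
  by apply: card_le5_no_two_disjoint; rewrite card_ord.
have o : 0 < n + m by lia.
by apply: (P3_hub_no_two_disjoint (broom_hub o _)); lia.
Qed.

End Broom.

Theorem corollary2p11 (V : finType) (e : rel V)
  (e_sym : symmetric e) (e_irr : irreflexive e) (T_tree : is_tree e) :
  cochordal (line_adj e) <->
  [\/ exists n : nat, isomorphic e (star_adj n),
      exists n m : nat, 0 < n /\ diameter3 (broom_adj n m) /\ isomorphic e (broom_adj n m),
      exists (n : nat) (S : {set 'I_n.+1}), isomorphic e (wstar_adj S)
    | exists n : nat, 2 <= n <= 5 /\ isomorphic e (path_adj n)].
Proof.
have [V_gt0 [e_connected e_acyclic]] := T_tree.
split=> [line_cochordal | family].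
  have no2 := cochordal_line_no_two_disjoint_P3 e_irr line_cochordal.
  have [c c_hub] := exists_P3_hub e_sym e_irr e_acyclic V_gt0 no2.
  apply: Or43; exists #|hub_nbrs e c|, (whiskered e c).
  exact (hub_isomorphic_wstar e_sym e_irr e_acyclic e_connected c_hub).
apply: no_two_disjoint_P3_cochordal_line => // /isomorphic_two_disjoint_P3.
case: family => [[n iso] | [n [m [_ [d3 iso]]]] | [n [S iso]] | [n [/andP [_ n5] iso]]];
  move=> /(_ _ _ iso).
- exact: P3_hub_no_two_disjoint (star_hub n).
- exact: broom_no_two_disjoint_P3.
- exact: P3_hub_no_two_disjoint (wstar_hub S).
- by apply: card_le5_no_two_disjoint; rewrite card_ord.
Qed.
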